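(* Let $\Phi(v_1,\dots,v_r)$ be an $\mathrm{st}$-prenex formula all of whose parameters are standard. Then (in SPOT) for every standard set $S$ there is a standard set $P$ such that for all standard $v_1,\dots,v_r$: $$\langle v_1,\dots,v_r\rangle\in P\iff \langle v_1,\dots,v_r\rangle\in S\wedge\Phi(v_1,\dots,v_r).$$
   Context: We work in the theory SPOT. Its language is the $\in$-language (membership together with the usual defined symbols of mathematics such as $\mathbb N,\mathbb R,<,+,\cdot$) enriched by a unary predicate $\mathrm{st}$ (''$x$ is standard''). An $\in$-formula is a formula not mentioning $\mathrm{st}$. $\forall^{\mathrm{st}}x$ and $\exists^{\mathrm{st}}x$ denote quantifiers restricted to standard sets. The axioms of SPOT are: ZF; Transfer: for every $\in$-formula $\varphi(x)$ all of whose parameters are standard, $\forall^{\mathrm{st}}x\,\varphi(x)\to\forall x\,\varphi(x)$; Nontriviality: $\exists \nu\in\mathbb N\,\forall^{\mathrm{st}}n\in\mathbb N\,(n\neq\nu)$; Standard Part: $\forall A\subseteq\mathbb N\,\exists^{\mathrm{st}}B\subseteq\mathbb N\,\forall^{\mathrm{st}}n\in\mathbb N\,(n\in B\iff n\in A)$. An $\mathrm{st}$-prenex formula is one of the form $\mathsf Q^{\mathrm{st}}u_1\cdots\mathsf Q^{\mathrm{st}}u_s\,\psi(u_1,\dots,u_s,v_1,\dots,v_r)$ where $\psi$ is an $\in$-formula and each $\mathsf Q^{\mathrm{st}}$ is $\forall^{\mathrm{st}}$ or $\exists^{\mathrm{st}}$ (all quantifiers over standard sets precede all ordinary quantifiers).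 *)

(* A semantic (model-theoretic) rendering of the theory SPOT:
   formulas of the (∈, =, st)-language are a deep embedding; a model of SPOT
   is a type M with relations mem, st satisfying the axioms; "SPOT proves X"
   is rendered as "X holds in every model of SPOT" (Gödel completeness). *)
From Stdlib Require Import List Arith.
Import ListNotations.

Inductive form : Type :=
| FMem : nat -> nat -> form
| FEq  : nat -> nat -> form
| FSt  : nat -> form
| FBot : form
| FNot : form -> form
| FAnd : form -> form -> form
| FOr  : form -> form -> form
| FImp : form -> form -> form
| FAll : nat -> form -> form
| FEx  : nat -> form -> form.

Fixpoint in_formula (p : form) : Prop :=
  match p with
  | FMem _ _ | FEq _ _ | FBot => True
  | FSt _ => False
  | FNot q => in_formula q
  | FAnd q r | FOr q r | FImp q r => in_formula q /\ in_formula r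
  | FAll _ q | FEx _ q => in_formula q
  end.

Fixpoint is_free (y : nat) (p : form) : Prop :=
  match p with
  | FMem a b | FEq a b => y = a \/ y = b
  | FSt a => y = a
  | FBot => False
  | FNot q => is_free y q
  | FAnd q r | FOr q r | FImp q r => is_free y q \/ is_free y r
  | FAll x q | FEx x q => y <> x /\ is_free y q
  end.

Fixpoint st_prenex (pre : list (bool * nat)) (psi : form) : form :=
  match pre with
  | [] => psi
  | (true, u) :: pre' => FAll u (FImp (FSt u) (st_prenex pre' psi))
  | (false, u) :: pre' => FEx u (FAnd (FSt u) (st_prenex pre' psi))
  end.

Definition upd {M : Type} (rho : nat -> M) (x : nat) (a : M) : nat -> M :=
  fun y => if Nat.eqb y x then a else rho y.

Fixpoint upd_list {M : Type} (rho : nat -> M) (xs : list nat) (as_ : list M)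
  : nat -> M :=
  match xs, as_ with
  | x :: xs', a :: as' => upd (upd_list rho xs' as') x a
  | _, _ => rho
  end.

Fixpoint sat {M : Type} (mem : M -> M -> Prop) (st : M -> Prop)
  (rho : nat -> M) (p : form) : Prop :=
  match p with
  | FMem x y => mem (rho x) (rho y)
  | FEq x y => rho x = rho y
  | FSt x => st (rho x)
  | FBot => False
  | FNot q => ~ sat mem st rho q
  | FAnd q r => sat mem st rho q /\ sat mem st rho r
  | FOr q r => sat mem st rho q \/ sat mem st rho r
  | FImp q r => sat mem st rho q -> sat mem st rho r
  | FAll x q => forall a, sat mem st (upd rho x a) q
  | FEx x q => exists a, sat mem st (upd rho x a) q
  end.

Section SetNotions.
Context {M : Type} (mem : M -> M -> Prop).

Definition is_empty (e : M) : Prop := forall z, ~ mem z e.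
Definition is_succ (y s : M) : Prop := forall z, mem z s <-> (mem z y \/ z = y).
Definition inductive (I : M) : Prop :=
  (exists e, is_empty e /\ mem e I) /\
  (forall y, mem y I -> exists s, is_succ y s /\ mem s I).
Definition is_omega (w : M) : Prop :=
  forall z, mem z w <-> (forall I, inductive I -> mem z I).
Definition subset (A B : M) : Prop := forall z, mem z A -> mem z B.

(* Kuratowski pair p = <a, b> = {{a},{a,b}} *)
Definition is_pair (p a b : M) : Prop :=
  forall z, mem z p <->
    ((forall w, mem w z <-> w = a) \/ (forall w, mem w z <-> (w = a \/ w = b))).

Fixpoint is_tuple (t : M) (l : list M) : Prop :=
  match l with
  | [] => is_empty t
  | [a] => t = a
  | a :: l' => exists t', is_tuple t' l' /\ is_pair t a t'
  end.
End SetNotions.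

Record SPOT_model (M : Type) (mem : M -> M -> Prop) (st : M -> Prop) : Prop := {
  ax_ext : forall x y, (forall z, mem z x <-> mem z y) -> x = y;
  ax_pair : forall a b, exists p, forall z, mem z p <-> (z = a \/ z = b);
  ax_union : forall x, exists u, forall z, mem z u <-> exists y, mem y x /\ mem z y;
  ax_power : forall x, exists p, forall z, mem z p <-> subset mem z x;
  ax_inf : exists I, inductive mem I;
  ax_found : forall x, (exists y, mem y x) ->
      exists y, mem y x /\ ~ exists z, mem z y /\ mem z x;
  ax_sep : forall (phi : form), in_formula phi -> forall (x : nat) (rho : nat -> M) (A : M),
      exists B, forall z, mem z B <-> (mem z A /\ sat mem st (upd rho x z) phi);
  ax_repl : forall (phi : form), in_formula phi -> forall (x y : nat), x <> y ->
      forall (rho : nat -> M) (A : M),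
      (forall a, mem a A -> exists b, sat mem st (upd (upd rho x a) y b) phi /\
          forall b', sat mem st (upd (upd rho x a) y b') phi -> b' = b) ->
      exists B, forall b, mem b B <->
          exists a, mem a A /\ sat mem st (upd (upd rho x a) y b) phi;
  ax_transfer : forall (phi : form), in_formula phi -> forall (x : nat) (rho : nat -> M),
      (forall y, is_free y phi -> y <> x -> st (rho y)) ->
      (forall a, st a -> sat mem st (upd rho x a) phi) ->
      forall a, sat mem st (upd rho x a) phi;
  ax_nontriv : exists w, is_omega mem w /\
      exists nu, mem nu w /\ forall n, st n -> mem n w -> n <> nu;
  ax_stpart : forall w, is_omega mem w -> forall A, subset mem A w ->
      exists B, st B /\ subset mem B w /\
        forall n, st n -> mem n w -> (mem n B <-> mem n A)
}.

(* For standard values of its free variables an st-prenex formula is equivalent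
   to the ∈-formula Φ' obtained by dropping every st-restriction: Transfer removes
   the restrictions one quantifier at a time.  Separation then yields the set
   {t ∈ S | ∃ v, t = <v> ∧ Φ'(v)}, which is defined by an ∈-formula with
   standard parameters; by Transfer there is also a standard set with this
   defining property.  For standard v, injectivity of tuples turns membership
   of <v> in it into Φ(v). *)
From Stdlib Require Import List Arith Lia Classical.
Import ListNotations.

Definition FIff (p q : form) : form := FAnd (FImp p q) (FImp q p).

(* [z] and [w] are bound scratch variables, distinct from [p], [a], [b]. *)
Definition FPair (z w p a b : nat) : form :=
  FAll z (FIff (FMem z p)
    (FOr (FAll w (FIff (FMem w z) (FEq w a)))
         (FAll w (FIff (FMem w z) (FOr (FEq w a) (FEq w b)))))).

(* The bound variables are [B], [B+1], [B+2], [B+3], ...; they must exceed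
   [t] and all of [xs]. *)
Fixpoint FTuple (B t : nat) (xs : list nat) : form :=
  match xs with
  | [] => FAll B (FNot (FMem B t))
  | [x] => FEq t x
  | x :: xs' => FEx B (FAnd (FTuple (B + 3) B xs') (FPair (B + 1) (B + 2) t x B))
  end.

Fixpoint FExs (xs : list nat) (p : form) : form :=
  match xs with
  | [] => p
  | x :: xs' => FExs xs' (FEx x p)
  end.

Definition FExsTuple (x : nat) (xs : list nat) (p : form) : form :=
  FExs xs (FAnd (FTuple (S (list_max (x :: xs))) x xs) p).

Fixpoint internal_prenex (pre : list (bool * nat)) (psi : form) : form :=
  match pre with
  | [] => psi
  | (true, u) :: pre' => FAll u (internal_prenex pre' psi)
  | (false, u) :: pre' => FEx u (internal_prenex pre' psi)
  end.

Fixpoint max_var (p : form) : nat :=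
  match p with
  | FMem a b | FEq a b => max a b
  | FSt a => a
  | FBot => 0
  | FNot q => max_var q
  | FAnd q r | FOr q r | FImp q r => max (max_var q) (max_var r)
  | FAll x q | FEx x q => max x (max_var q)
  end.

Lemma is_free_le_max_var (p : form) (y : nat) : is_free y p -> y <= max_var p.
Proof.
  induction p; cbn; intros Hy; try tauto;
    repeat match goal with H : _ \/ _ |- _ => destruct H | H : _ /\ _ |- _ => destruct H end;
    subst; try lia;
    repeat match goal with IH : is_free y ?q -> _, H : is_free y ?q |- _ => specialize (IH H) end;
    lia.
Qed.

Lemma le_list_max (l : list nat) (y : nat) : In y l -> y <= list_max l.
Proof.
  intros Hy. pose proof (proj1 (list_max_le l _) (le_n _)) as Hle.
  rewrite Forall_forall in Hle. auto.
Qed.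

Lemma lt_S_list_max (l : list nat) : Forall (fun y => y < S (list_max l)) l.
Proof. apply Forall_forall. intros y Hy%le_list_max. lia. Qed.

Lemma in_formula_FTuple (B t : nat) (xs : list nat) : in_formula (FTuple B t xs).
Proof.
  revert B t; induction xs as [|x [|x2 xs] IH]; intros B t; cbn; auto.
  split; [apply IH | cbn; tauto].
Qed.

Lemma in_formula_FExs (xs : list nat) (p : form) : in_formula p -> in_formula (FExs xs p).
Proof. revert p; induction xs; intros p Hp; cbn; auto. Qed.

Lemma in_formula_FExsTuple (x : nat) (xs : list nat) (p : form) :
  in_formula p -> in_formula (FExsTuple x xs p).
Proof. intros Hp. apply in_formula_FExs. split; [apply in_formula_FTuple | exact Hp]. Qed.

Lemma in_formula_internal_prenex (pre : list (bool * nat)) (psi : form) :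
  in_formula psi -> in_formula (internal_prenex pre psi).
Proof. induction pre as [|[[] u] pre IH]; cbn; auto. Qed.

Lemma is_free_internal_prenex (pre : list (bool * nat)) (psi : form) (y : nat) :
  is_free y (internal_prenex pre psi) -> is_free y (st_prenex pre psi).
Proof. induction pre as [|[[] u] pre IH]; cbn; tauto. Qed.

Lemma is_free_FPair (y z w p a b : nat) :
  is_free y (FPair z w p a b) -> y = p \/ y = a \/ y = b.
Proof. cbn; tauto. Qed.

Lemma is_free_FTuple (B t y : nat) (xs : list nat) :
  t < B -> Forall (fun x => x < B) xs -> is_free y (FTuple B t xs) -> y = t \/ In y xs.
Proof.
  revert B t; induction xs as [|x [|x2 xs] IH]; intros B t Ht Hxs Hy; cbn in Hy |- *.
  - tauto.
  - destruct Hy; subst; auto.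
  - inversion_clear Hxs as [|? ? Hx Hxs'].
    destruct Hy as [HyB [Hy | Hy%is_free_FPair]].
    + apply IH in Hy; [| lia | eapply Forall_impl; [| exact Hxs']; cbn; lia].
      destruct Hy; [congruence | tauto].
    + destruct Hy as [| [|]]; subst; auto; congruence.
Qed.

Lemma is_free_FExs (xs : list nat) (p : form) (y : nat) :
  is_free y (FExs xs p) -> ~ In y xs /\ is_free y p.
Proof.
  revert p; induction xs as [|x xs IH]; intros p Hy; cbn in Hy |- *.
  - auto.
  - apply IH in Hy as [Hxs [Hx Hp]]. intuition.
Qed.

Lemma is_free_FExsTuple (x y : nat) (xs : list nat) (p : form) :
  is_free y (FExsTuple x xs p) -> y <> x -> ~ In y xs /\ is_free y p.
Proof.
  intros [Hyxs [Hy | Hy]]%is_free_FExs Hyx; [| tauto].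
  pose proof (lt_S_list_max (x :: xs)) as Hbound. inversion_clear Hbound.
  apply is_free_FTuple in Hy as [|]; tauto.
Qed.

Section Valuations.
Context {M : Type}.

Lemma upd_same (rho : nat -> M) (x : nat) (a : M) : upd rho x a x = a.
Proof. unfold upd. now rewrite Nat.eqb_refl. Qed.

Lemma upd_other (rho : nat -> M) (x : nat) (a : M) (y : nat) :
  y <> x -> upd rho x a y = rho y.
Proof. intros Hyx. unfold upd. now rewrite (proj2 (Nat.eqb_neq _ _) Hyx). Qed.

Lemma upd_list_notin (xs : list nat) (as_ : list M) (rho : nat -> M) (y : nat) :
  ~ In y xs -> upd_list rho xs as_ y = rho y.
Proof.
  revert as_; induction xs as [|x xs IH]; intros [|a as_] Hy; cbn; auto.
  rewrite upd_other by (intros ->; apply Hy; now left).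
  apply IH. intros Hin; apply Hy; now right.
Qed.

Lemma upd_list_ext (xs : list nat) (as_ : list M) (r1 r2 : nat -> M) (y : nat) :
  r1 y = r2 y -> upd_list r1 xs as_ y = upd_list r2 xs as_ y.
Proof.
  revert as_; induction xs as [|x xs IH]; intros [|a as_] Hy; cbn; auto.
  unfold upd. destruct (Nat.eqb y x); auto.
Qed.

Lemma upd_list_in (xs : list nat) (as_ : list M) (rho : nat -> M) (y : nat) :
  length as_ = length xs -> In y xs -> In (upd_list rho xs as_ y) as_.
Proof.
  revert as_; induction xs as [|x xs IH]; intros [|a as_] Hlen Hy; cbn in *;
    try discriminate; try contradiction.
  unfold upd. destruct (Nat.eqb_spec y x); [now left | right].
  apply IH; [lia | destruct Hy; congruence].
Qed.

Lemma map_upd_list (xs : list nat) (as_ : list M) (rho : nat -> M) :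
  NoDup xs -> length as_ = length xs -> map (upd_list rho xs as_) xs = as_.
Proof.
  revert as_; induction xs as [|x xs IH]; intros [|a as_] Hnd Hlen; cbn in *;
    try discriminate; auto.
  inversion_clear Hnd as [|? ? Hx Hnd'].
  rewrite upd_same. f_equal.
  rewrite <- (IH as_) at 2 by auto.
  apply map_ext_in. intros y Hy. apply upd_other. congruence.
Qed.

End Valuations.

Ltac simpl_upd :=
  unfold upd;
  repeat match goal with
  | |- context [Nat.eqb ?a ?b] =>
      first [rewrite (Nat.eqb_refl a) | rewrite (proj2 (Nat.eqb_neq a b)) by (lia || congruence)]
  end;
  cbv beta iota.

Section Semantics.
Context {M : Type} (mem : M -> M -> Prop) (st : M -> Prop).

Lemma sat_free_ext (p : form) (r1 r2 : nat -> M) :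
  (forall y, is_free y p -> r1 y = r2 y) -> (sat mem st r1 p <-> sat mem st r2 p).
Proof.
  revert r1 r2; induction p; intros r1 r2 Hfree; cbn in *;
    try (rewrite ?(IHp r1 r2), ?(IHp1 r1 r2), ?(IHp2 r1 r2), ?Hfree by auto; tauto).
  all: assert (Hupd : forall a, sat mem st (upd r1 n a) p <-> sat mem st (upd r2 n a) p)
         by (intros a; apply IHp; intros y Hy; unfold upd;
             destruct (Nat.eqb_spec y n); auto).
  - now setoid_rewrite Hupd.
  - now setoid_rewrite Hupd.
Qed.

Lemma sat_FPair (rho : nat -> M) (z w p a b : nat) :
  z <> w -> p <> z -> p <> w -> a <> z -> a <> w -> b <> z -> b <> w ->
  sat mem st rho (FPair z w p a b) <-> is_pair mem (rho p) (rho a) (rho b).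
Proof.
  intros. unfold FPair, FIff, is_pair. cbn. simpl_upd.
  split; intros Hp c; specialize (Hp c); firstorder.
Qed.

Lemma sat_FTuple (xs : list nat) (B t : nat) (rho : nat -> M) :
  t < B -> Forall (fun x => x < B) xs ->
  sat mem st rho (FTuple B t xs) <-> is_tuple mem (rho t) (map rho xs).
Proof.
  revert B t rho; induction xs as [|x [|x2 xs] IH]; intros B t rho Ht Hxs.
  - cbn. unfold is_empty. now setoid_rewrite upd_same; setoid_rewrite upd_other; [|lia].
  - cbn. tauto.
  - inversion_clear Hxs as [|? ? Hx Hxs'].
    assert (Hmap : forall c, map (upd rho B c) (x2 :: xs) = map rho (x2 :: xs)).
    { intros c. apply map_ext_in. intros y Hy.
      apply upd_other. rewrite Forall_forall in Hxs'. specialize (Hxs' y Hy). lia. }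
    change (sat mem st rho (FTuple B t (x :: x2 :: xs)))
      with (exists c, sat mem st (upd rho B c) (FTuple (B + 3) B (x2 :: xs)) /\
                      sat mem st (upd rho B c) (FPair (B + 1) (B + 2) t x B)).
    change (is_tuple mem (rho t) (map rho (x :: x2 :: xs)))
      with (exists c, is_tuple mem c (map rho (x2 :: xs)) /\ is_pair mem (rho t) (rho x) c).
    setoid_rewrite IH; [| lia | eapply Forall_impl; [| exact Hxs']; cbn; lia].
    setoid_rewrite sat_FPair; try lia.
    setoid_rewrite Hmap. setoid_rewrite upd_same.
    now setoid_rewrite upd_other; [| lia | lia].
Qed.

Lemma sat_FExs (xs : list nat) (p : form) (rho : nat -> M) :
  sat mem st rho (FExs xs p) <->
  exists as_, length as_ = length xs /\ sat mem st (upd_list rho xs as_) p.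
Proof.
  revert p; induction xs as [|x xs IH]; intros p; cbn.
  - split; [now exists [] | intros [[|a as_] [Hlen Hp]]; [exact Hp | discriminate]].
  - rewrite IH. cbn. split.
    + intros [as_ [Hlen [a Hp]]]. now exists (a :: as_); cbn; auto.
    + intros [[|a as_] [Hlen Hp]]; [discriminate |].
      exists as_. cbn in *. split; [lia | now exists a].
Qed.

Lemma sat_FExsTuple (x : nat) (xs : list nat) (p : form) (rho : nat -> M) (t : M) :
  NoDup xs -> ~ In x xs -> ~ is_free x p ->
  sat mem st (upd rho x t) (FExsTuple x xs p) <->
  exists as_, length as_ = length xs /\ is_tuple mem t as_ /\
              sat mem st (upd_list rho xs as_) p.
Proof.
  intros Hnd Hx Hp.
  pose proof (lt_S_list_max (x :: xs)) as Hbound.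
  inversion_clear Hbound as [|? ? Hxb Hxsb].
  unfold FExsTuple. rewrite sat_FExs. cbn [sat].
  setoid_rewrite sat_FTuple; [| exact Hxb | exact Hxsb].
  setoid_rewrite upd_list_notin; [| exact Hx].
  rewrite upd_same.
  assert (Hext : forall as_, sat mem st (upd_list (upd rho x t) xs as_) p <->
                             sat mem st (upd_list rho xs as_) p).
  { intros as_. apply sat_free_ext. intros y Hy. apply upd_list_ext, upd_other.
    congruence. }
  split; intros [as_ [Hlen Hsat]]; exists as_;
    rewrite Hext, map_upd_list in * by auto; tauto.
Qed.

End Semantics.

Section SPOT.
Context {M : Type} (mem : M -> M -> Prop) (st : M -> Prop).
Hypothesis HM : SPOT_model M mem st.

Lemma is_pair_diag (p a b : M) : is_pair mem p a a -> is_pair mem p a b -> b = a.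
Proof.
  intros Haa Hab.
  destruct (ax_pair _ _ _ HM a b) as [s Hs].
  assert (Hsp : mem s p) by (apply Hab; now right).
  assert (Hbs : mem b s) by (apply Hs; now right).
  apply Haa in Hsp as [Hs' | Hs']; apply Hs' in Hbs; tauto.
Qed.

Lemma is_pair_inj (p a b a' b' : M) :
  is_pair mem p a b -> is_pair mem p a' b' -> a = a' /\ b = b'.
Proof.
  intros Hab Hab'.
  destruct (ax_pair _ _ _ HM a a) as [s Hs].
  assert (Hsp : mem s p) by (apply Hab; left; intros w; rewrite Hs; tauto).
  assert (Ea : a' = a).
  { apply Hab' in Hsp.
    assert (Ha's : mem a' s) by (destruct Hsp as [K | K]; apply K; auto).
    apply Hs in Ha's. tauto. }
  subst a'. split; [reflexivity |].
  destruct (ax_pair _ _ _ HM a b) as [s' Hs'].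
  assert (Hsp' : mem s' p) by (apply Hab; now right).
  assert (Hbs' : mem b s') by (apply Hs'; now right).
  assert (Eb : b = a \/ b = b') by (apply Hab' in Hsp' as [K | K]; apply K in Hbs'; tauto).
  destruct Eb as [-> | ->]; [| reflexivity].
  symmetry. now apply (is_pair_diag p a).
Qed.

Lemma is_tuple_inj (l1 l2 : list M) (t : M) :
  is_tuple mem t l1 -> is_tuple mem t l2 -> length l1 = length l2 -> l1 = l2.
Proof.
  revert l2 t; induction l1 as [|a [|a2 l1] IH];
    intros [|b [|b2 l2]] t H1 H2 Hlen; cbn in *; try discriminate; auto.
  - congruence.
  - destruct H1 as [t1 [T1 P1]], H2 as [t2 [T2 P2]].
    destruct (is_pair_inj _ _ _ _ _ P1 P2) as [-> ->].
    f_equal. apply (IH _ t2); auto.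
Qed.

Lemma transfer_exists (phi : form) (x : nat) (rho : nat -> M) :
  in_formula phi -> (forall y, is_free y phi -> y <> x -> st (rho y)) ->
  (exists a, sat mem st (upd rho x a) phi) ->
  exists a, st a /\ sat mem st (upd rho x a) phi.
Proof.
  intros Hin Hpar [a Ha].
  apply NNPP. intros Hno.
  enough (Hneg : forall b, sat mem st (upd rho x b) (FNot phi)) by exact (Hneg a Ha).
  apply (ax_transfer _ _ _ HM); auto.
  intros b Hb Hsat. apply Hno. eauto.
Qed.

Lemma st_prenex_transfer (pre : list (bool * nat)) (psi : form) (rho : nat -> M) :
  in_formula psi ->
  (forall y, is_free y (internal_prenex pre psi) -> st (rho y)) ->
  sat mem st rho (st_prenex pre psi) <-> sat mem st rho (internal_prenex pre psi).
Proof.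
  revert rho; induction pre as [|[[] u] pre IH]; intros rho Hpsi Hpar;
    cbn [st_prenex internal_prenex sat] in *; [tauto | |];
    (assert (Hstd : forall a, st a ->
       sat mem st (upd rho u a) (st_prenex pre psi) <->
       sat mem st (upd rho u a) (internal_prenex pre psi))
     by (intros a Ha; apply IH; auto; intros y Hy; unfold upd;
         destruct (Nat.eqb_spec y u); auto; apply Hpar; cbn; auto));
    assert (Hpar' : forall y, is_free y (internal_prenex pre psi) -> y <> u -> st (rho y))
      by (intros y Hy Hyu; apply Hpar; cbn; auto);
    rewrite ?upd_same; setoid_rewrite upd_same.
  - split.
    + intros H. apply (ax_transfer _ _ _ HM); auto using in_formula_internal_prenex.
      intros a Ha. apply Hstd, H; auto.
    + intros H a Ha. apply Hstd; auto.
  - split.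
    + intros [a [Ha H]]. exists a. apply Hstd; auto.
    + intros H. apply transfer_exists in H as [a [Ha H]];
        auto using in_formula_internal_prenex.
      exists a. split; [exact Ha | apply Hstd; auto].
Qed.

(* Separation gives an internal set; Transfer applied to "∃ P, P is the set
   {x ∈ A | phi}" makes it standard. *)
Lemma standard_separation (phi : form) (x : nat) (rho : nat -> M) (A : M) :
  in_formula phi -> (forall y, is_free y phi -> y <> x -> st (rho y)) -> st A ->
  exists P, st P /\ forall t, mem t P <-> mem t A /\ sat mem st (upd rho x t) phi.
Proof.
  intros Hin Hpar HA.
  set (p := S (max x (max_var phi))).
  set (s := S p).
  set (Sep := FAll x (FIff (FMem x p) (FAnd (FMem x s) phi))).
  assert (Hsep : forall P, sat mem st (upd (upd rho s A) p P) Sep <->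
                 forall t, mem t P <-> mem t A /\ sat mem st (upd rho x t) phi).
  { intros P.
    assert (Ep : forall t, upd (upd (upd rho s A) p P) x t p = P)
      by (intros t; simpl_upd; reflexivity).
    assert (Es : forall t, upd (upd (upd rho s A) p P) x t s = A)
      by (intros t; simpl_upd; reflexivity).
    assert (Ephi : forall t, sat mem st (upd (upd (upd rho s A) p P) x t) phi <->
                             sat mem st (upd rho x t) phi).
    { intros t. apply sat_free_ext. intros y Hy%is_free_le_max_var.
      destruct (Nat.eqb_spec y x) as [-> | Hyx]; [now rewrite !upd_same |].
      now rewrite !upd_other by lia. }
    unfold Sep, FIff. cbn [sat].
    setoid_rewrite upd_same. setoid_rewrite Ep. setoid_rewrite Es. setoid_rewrite Ephi.
    split; intros H t; specialize (H t); tauto. }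
  destruct (ax_sep _ _ _ HM phi Hin x rho A) as [B HB].
  destruct (transfer_exists Sep p (upd rho s A)) as [P [HP HPsep]].
  - cbn. tauto.
  - intros y Hy Hyp. unfold Sep, FIff in Hy. cbn in Hy. unfold upd.
    destruct (Nat.eqb_spec y s); auto.
    apply Hpar; tauto.
  - exists B. now apply Hsep.
  - exists P. split; [exact HP | now apply Hsep].
Qed.

End SPOT.

Theorem lemma2p8 :
  forall (M : Type) (mem : M -> M -> Prop) (st : M -> Prop),
  SPOT_model M mem st ->
  forall (pre : list (bool * nat)) (psi : form), in_formula psi ->
  forall (vs : list nat), NoDup vs ->
  forall (rho : nat -> M),
  (forall y, is_free y (st_prenex pre psi) -> ~ In y vs -> st (rho y)) ->
  forall S : M, st S ->
  exists P : M, st P /\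
    forall (as_ : list M), length as_ = length vs -> Forall st as_ ->
    forall t : M, is_tuple mem t as_ ->
      (mem t P <-> (mem t S /\ sat mem st (upd_list rho vs as_) (st_prenex pre psi))).
Proof.
  intros M mem st HM pre psi Hpsi vs Hnd rho Hpar S HS.
  set (F := internal_prenex pre psi).
  set (x := 1 + (max (max_var F) (list_max vs))).
  assert (Hxvs : ~ In x vs).
  { intros Hin%le_list_max. lia. }
  assert (HxF : ~ is_free x F) by (intros Hfree%is_free_le_max_var; lia).
  assert (Hin : in_formula (FExsTuple x vs F))
    by now apply in_formula_FExsTuple, in_formula_internal_prenex.
  assert (Hpar' : forall y, is_free y (FExsTuple x vs F) -> y <> x -> st (rho y)).
  { intros y Hy Hyx. apply is_free_FExsTuple in Hy as [Hyvs Hy]; [| exact Hyx].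
    apply Hpar; auto using is_free_internal_prenex. }
  destruct (standard_separation mem st HM _ x rho S Hin Hpar' HS) as [P [HP HPsep]].
  exists P. split; [exact HP |]. intros as_ Hlen Hst t Ht.
  assert (Hstd : forall y, is_free y F -> st (upd_list rho vs as_ y)).
  { intros y Hy. destruct (in_dec Nat.eq_dec y vs) as [Hin' | Hnin].
    - eapply Forall_forall; [exact Hst | now apply upd_list_in].
    - rewrite upd_list_notin by exact Hnin. auto using is_free_internal_prenex. }
  rewrite HPsep, sat_FExsTuple, st_prenex_transfer by auto.
  split; intros [HtS Hsat]; split; auto.
  - destruct Hsat as [bs [Hbs [Htb Hsat]]].
    now rewrite (is_tuple_inj mem st HM bs as_ t) in Hsat by congruence.
  - now exists as_.
Qed.
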